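(* Let $k \ge 2$ be an integer, let $\Pi$ be a $(k-1)\times k$ real matrix whose rows form an orthonormal basis of the orthogonal complement of the all-ones vector in $\mathbb{R}^k$, let $B$ be the $k \times \binom{k}{2}$ matrix whose columns are the vectors $e_i - e_j$ for all pairs $i<j$, and let $G = \Pi B / \sqrt{k}$. Then: (a) every column of $G$ has Euclidean norm $\sqrt{2/k}$; (b) $G G^T = I_{k-1}$; (c) for every real $\binom{k}{2}\times\binom{k}{2}$ diagonal matrix $D$, \[ \| G D G^T \| \geq \frac{1}{k}\sqrt{\frac{2}{k-1}}\, \|D\|_F, \] where $\|\cdot\|$ is the operator norm and $\|D\|_F$ is the Frobenius norm. *)

From HB Require Import structures.
From mathcomp Require Import all_boot all_order all_algebra.
From mathcomp Require Import all_classical all_reals.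
Set Implicit Arguments. Unset Strict Implicit. Unset Printing Implicit Defensive.
Import Order.TTheory GRing.Theory Num.Theory.
Local Open Scope ring_scope.
Local Open Scope classical_set_scope.

Definition pairs (k : nat) := {p : 'I_k * 'I_k | (p.1 < p.2)%N}.

Definition npairs (k : nat) : nat := #|{: pairs k}|.

Definition Bmx (R : ringType) (k : nat) : 'M[R]_(k, npairs k) :=
  \matrix_(i < k, c < npairs k)
    let p := val (enum_val (c : 'I_#|{: pairs k}|)) in
    ((i == p.1)%:R - (i == p.2)%:R).

Definition vnorm (R : rcfType) (n : nat) (x : 'cV[R]_n) : R :=
  Num.sqrt (\sum_i x i 0 ^+ 2).

Definition frob (R : rcfType) (m n : nat) (A : 'M[R]_(m, n)) : R :=
  Num.sqrt (\sum_i \sum_j A i j ^+ 2).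

Definition opnorm (R : realType) (m n : nat) (A : 'M[R]_(m, n)) : R :=
  sup [set vnorm (A *m x) | x in [set x : 'cV[R]_n | vnorm x <= 1]].

(* The rows of [Pi] span the orthogonal complement of the all-ones vector,
   which contains every column of [B]; hence [G^T G = B^T B / k], and with
   [B B^T = k I - J] this gives (a) and (b).  For (c), the squared Frobenius
   norm of [M = G D G^T] is [sum_{c,c'} d_c d_c' (G^T G)_{cc'}^2].  The entries
   of [B^T B] are 2 on the diagonal and lie in {-1, 0, 1} elsewhere, so
   [(B^T B)_{cc'}^2 = 2 [c = c'] + <|b_c|, |b_c'|>]; the second part is a
   positive semidefinite Gram form, leaving [|M|_F^2 >= 2 |D|_F^2 / k^2].  One
   of the k - 1 columns of [M] thus has squared norm at least
   [2 |D|_F^2 / (k^2 (k - 1))], and the operator norm dominates column norms. *)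

From HB Require Import structures.
From mathcomp Require Import all_boot all_order all_algebra.
From mathcomp Require Import all_classical all_reals.
From mathcomp Require Import ring zify.
Set Implicit Arguments. Unset Strict Implicit. Unset Printing Implicit Defensive.
Import Order.TTheory GRing.Theory Num.Theory.
Local Open Scope ring_scope.

Section Indicators.
Variable R : comNzRingType.

Lemma sum_indicator_mull n (x : 'I_n) (F : 'I_n -> R) :
  \sum_i (i == x)%:R * F i = F x.
Proof.
rewrite (bigD1 x) //= eqxx mul1r big1 ?addr0 // => i /negbTE ->.
by rewrite mul0r.
Qed.

Lemma sum_indicator n (x : 'I_n) : \sum_i (i == x)%:R = 1 :> R.
Proof.
rewrite -[RHS](sum_indicator_mull x (fun=> 1)).
by under [RHS]eq_bigr do rewrite mulr1.
Qed.

Lemma sum_incidence_dot n (a b c d : 'I_n) :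
  \sum_i (((i == a)%:R - (i == b)%:R) * ((i == c)%:R - (i == d)%:R) : R)
  = (a == c)%:R - (a == d)%:R - (b == c)%:R + (b == d)%:R.
Proof.
under eq_bigr do rewrite mulrBl !mulrBr.
by rewrite !sumrB !sum_indicator_mull; ring.
Qed.

Lemma sum_unsigned_incidence_dot n (a b c d : 'I_n) :
  \sum_i (((i == a)%:R + (i == b)%:R) * ((i == c)%:R + (i == d)%:R) : R)
  = (a == c)%:R + (a == d)%:R + (b == c)%:R + (b == d)%:R.
Proof.
under eq_bigr do rewrite mulrDl !mulrDr.
by rewrite !big_split /= !sum_indicator_mull; ring.
Qed.

(* For edges [a < b] and [c < d], the signed incidence product lies in
   {-1, 0, 1, 2} and equals 2 only when the edges coincide. *)
Lemma sqr_incidence_dot n (a b c d : 'I_n) : (a < b)%N -> (c < d)%N ->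
  ((a == c)%:R - (a == d)%:R - (b == c)%:R + (b == d)%:R) ^+ 2 =
  2 * ((a == c) && (b == d))%:R +
  ((a == c)%:R + (a == d)%:R + (b == c)%:R + (b == d)%:R) :> R.
Proof.
rewrite -!val_eqE /=.
case: a b c d => [a ?] [b ?] [c ?] [d ?] /= ab cd.
by case: (a =P c) => ?; case: (a =P d) => ?; case: (b =P c) => ?;
  case: (b =P d) => ? /=; try (exfalso; lia); ring.
Qed.

Lemma sum_sum_difference_dot n (a b : 'I_n) :
  \sum_i \sum_j (((i == a)%:R - (j == a)%:R) * ((i == b)%:R - (j == b)%:R) : R)
  = (n%:R * (a == b)%:R - 1) *+ 2.
Proof.
have inner i : \sum_j (((i == a)%:R - (j == a)%:R) * ((i == b)%:R - (j == b)%:R) : R)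
    = n%:R * ((i == a)%:R * (i == b)%:R) - (i == a)%:R - (i == b)%:R + (a == b)%:R.
  under eq_bigr do rewrite mulrBl !mulrBr.
  rewrite !sumrB sumr_const card_ord -mulr_sumr sum_indicator !sum_indicator_mull.
  by rewrite -mulr_natl; ring.
under eq_bigr do rewrite inner.
rewrite !big_split /= !sumrN -mulr_sumr !sum_indicator_mull !sum_indicator.
by rewrite sumr_const card_ord -mulr_natl; ring.
Qed.

End Indicators.

Section Pairs.
Variable k : nat.

Definition pair_of (c : 'I_(npairs k)) : 'I_k * 'I_k :=
  val (enum_val (c : 'I_#|{: pairs k}|)).

Lemma pair_of_lt c : ((pair_of c).1 < (pair_of c).2)%N.
Proof. exact: (valP (enum_val (c : 'I_#|{: pairs k}|))). Qed.

Lemma pair_of_inj : injective pair_of.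
Proof. by move=> c c' /(@val_inj _ _ (pairs k)) /enum_val_inj. Qed.

Lemma Bmx_pair_of (R : nzRingType) i c :
  Bmx R k i c = (i == (pair_of c).1)%:R - (i == (pair_of c).2)%:R.
Proof. by rewrite mxE. Qed.

Variable R : nmodType.

Lemma sum_pair_of (F : 'I_k * 'I_k -> R) :
  \sum_c F (pair_of c) = \sum_(p : 'I_k * 'I_k | (p.1 < p.2)%N) F p.
Proof.
rewrite /npairs -(big_enum_val (fun x : pairs k => F (val x))) /=.
rewrite (reindex_omap (val : pairs k -> _) insub); last first.
  by move=> i lt_i; rewrite insubT.
by apply: eq_bigl => -[i iA] /=; rewrite insubT ?iA /= eqxx.
Qed.

Lemma sum_lt_pairs_sym (F : 'I_k * 'I_k -> R) :
  (forall i j, F (i, j) = F (j, i)) -> (forall i, F (i, i) = 0) ->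
  (\sum_(p : 'I_k * 'I_k | (p.1 < p.2)%N) F p) *+ 2 = \sum_i \sum_j F (i, j).
Proof.
move=> Fsym Fdiag.
rewrite (pair_bigA _ (fun i j => F (i, j))) /=.
rewrite [RHS](bigID (fun p : 'I_k * 'I_k => (p.1 < p.2)%N)) /= mulr2n.
congr (_ + _); first by apply: eq_bigr => -[].
have swap_inj : injective (fun p : 'I_k * 'I_k => (p.2, p.1)).
  by move=> [a b] [c d] /= [-> ->].
rewrite big_mkcond [RHS]big_mkcond (reindex_inj swap_inj).
apply: eq_bigr => -[i j] _ /=.
case: (ltngtP i j) => [//|_|/val_inj ->]; [exact: Fsym | by rewrite Fdiag].
Qed.

End Pairs.

Section Norms.
Variable R : realType.

Lemma abs_coord_le_vnorm n (x : 'cV[R]_n) j : `|x j 0| <= vnorm x.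
Proof.
rewrite -sqrtr_sqr; apply: ler_wsqrtr.
rewrite (bigD1 j) //= lerDl; apply: sumr_ge0 => i _; exact: sqr_ge0.
Qed.

Lemma vnorm_mulmx_le m n (A : 'M[R]_(m, n)) x : vnorm x <= 1 ->
  vnorm (A *m x) <= Num.sqrt (\sum_i (\sum_j `|A i j|) ^+ 2).
Proof.
move=> x_le1; apply: ler_wsqrtr; apply: ler_sum => i _.
rewrite -real_normK ?num_real // lerXn2r ?nnegrE ?sumr_ge0 //.
rewrite mxE; apply: le_trans (ler_norm_sum _ _ _) _; apply: ler_sum => j _.
rewrite normrM ler_piMr //; exact: le_trans (abs_coord_le_vnorm _ _) x_le1.
Qed.

Lemma vnorm_col_le_opnorm m n (A : 'M[R]_(m, n)) j : vnorm (col j A) <= opnorm A.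
Proof.
apply: ub_le_sup.
  exists (Num.sqrt (\sum_i (\sum_j `|A i j|) ^+ 2)) => _ [x /= x_le1 <-].
  exact: vnorm_mulmx_le.
exists (delta_mx j 0); last by rewrite colE.
rewrite /= /vnorm -sqrtr1 ler_wsqrtr //.
under eq_bigr do rewrite mxE eqxx andbT expr2.
by rewrite sum_indicator_mull eqxx.
Qed.

Lemma frob_diag_mx n (d : 'rV[R]_n) :
  frob (diag_mx d) = Num.sqrt (\sum_c d 0 c ^+ 2).
Proof.
congr Num.sqrt; apply: eq_bigr => i _.
rewrite (bigD1 i) //= big1 ?addr0 => [|j /negbTE ji]; rewrite mxE.
  by rewrite eqxx mulr1n.
by rewrite eq_sym ji mulr0n expr0n.
Qed.

Lemma exists_ge_mean n (F : 'I_n -> R) : (0 < n)%N ->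
  exists i, (\sum_j F j) / n%:R <= F i.
Proof.
move=> n_gt0; apply/existsP; apply: contraT; rewrite negb_exists => /forallP lt.
have : \sum_j F j < \sum_(j < n) (\sum_j F j) / n%:R.
  apply: ltr_sum => [|i _]; last by rewrite ltNge lt.
  by apply/hasP; exists (Ordinal n_gt0); rewrite ?mem_index_enum.
by rewrite sumr_const card_ord -(mulr_natr (_ / _)) divfK ?ltxx // pnatr_eq0 -lt0n.
Qed.

End Norms.

Section Gram.
Variable R : comNzRingType.

Lemma sum_sqr_mx_diag_tr m n (A : 'M[R]_(m, n)) (d : 'rV[R]_n) :
  \sum_b \sum_a ((A *m diag_mx d *m A^T) a b) ^+ 2 =
  \sum_c \sum_c' d 0 c * d 0 c' * (A^T *m A) c c' ^+ 2.
Proof.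
have entry a b : (A *m diag_mx d *m A^T) a b = \sum_c A a c * d 0 c * A b c.
  by rewrite mul_mx_diag mxE; apply: eq_bigr => c _; rewrite !mxE.
under eq_bigr do under eq_bigr do rewrite entry expr2 big_distrlr /=.
under eq_bigr do rewrite exchange_big.
under eq_bigr do under eq_bigr do rewrite exchange_big.
rewrite exchange_big /=; under eq_bigr do rewrite exchange_big.
apply: eq_bigr => c _; apply: eq_bigr => c' _.
rewrite mxE expr2 big_distrlr /= mulr_sumr; apply: eq_bigr => b _.
rewrite mulr_sumr; apply: eq_bigr => a _; rewrite !mxE; ring.
Qed.

Lemma sum_quad_gram m n (x : 'I_n -> R) (N : 'I_m -> 'I_n -> R) :
  \sum_c \sum_c' x c * x c' * (\sum_i N i c * N i c') =
  \sum_i (\sum_c x c * N i c) ^+ 2.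
Proof.
symmetry; under eq_bigr do rewrite expr2 big_distrlr /=.
rewrite exchange_big /=; apply: eq_bigr => c _.
rewrite exchange_big /=; apply: eq_bigr => c' _.
by rewrite mulr_sumr; apply: eq_bigr => i _; ring.
Qed.

End Gram.

Section IncidenceMatrix.
Variables (R : comNzRingType) (k : nat).
Local Notation B := (Bmx R k).

Lemma trBmx_mul_const1 : B^T *m (const_mx 1 : 'M[R]_(k, 1)) = 0.
Proof.
apply/matrixP => c j; rewrite !mxE.
under eq_bigr do rewrite !mxE mulr1.
by rewrite sumrB !sum_indicator subrr.
Qed.

Lemma gram_Bmx c c' : (B^T *m B) c c' =
  ((pair_of c).1 == (pair_of c').1)%:R - ((pair_of c).1 == (pair_of c').2)%:R
  - ((pair_of c).2 == (pair_of c').1)%:R + ((pair_of c).2 == (pair_of c').2)%:R.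
Proof.
rewrite mxE -sum_incidence_dot; apply: eq_bigr => i _.
by rewrite [B^T _ _]mxE !Bmx_pair_of.
Qed.

End IncidenceMatrix.

Lemma Bmx_mul_tr (R : numDomainType) k :
  Bmx R k *m (Bmx R k)^T = k%:R *: 1%:M - const_mx 1.
Proof.
apply/matrixP => a b; rewrite !mxE.
pose F (p : 'I_k * 'I_k) : R :=
  ((p.1 == a)%:R - (p.2 == a)%:R) * ((p.1 == b)%:R - (p.2 == b)%:R).
have -> : \sum_c Bmx R k a c * (Bmx R k)^T c b = \sum_c F (pair_of c).
  apply: eq_bigr => c _; rewrite [_^T _ _]mxE !Bmx_pair_of.
  by rewrite ![a == _]eq_sym ![b == _]eq_sym.
rewrite sum_pair_of; apply: (@mulIf _ 2%:R); first by rewrite pnatr_eq0.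
rewrite !mulr_natr sum_lt_pairs_sym ?sum_sum_difference_dot => [|i j|i];
  rewrite /F /=.
- by rewrite mulr_natr.
- ring.
- by rewrite subrr mul0r.
Qed.

Section Frame.
Variables (R : realType) (k : nat).
Hypothesis k_ge2 : (2 <= k)%N.
Variable Pi : 'M[R]_(k.-1, k).
Hypothesis Pi_orthonormal : Pi *m Pi^T = 1%:M.
Hypothesis Pi_span : (Pi == kermx (const_mx 1 : 'M[R]_(k, 1)))%MS.

Local Notation B := (Bmx R k).
Local Notation G := ((Num.sqrt (k%:R : R))^-1 *: (Pi *m B)).

Let k_gt0 : (0 < k)%N. Proof. exact: leq_trans k_ge2. Qed.

Lemma Pi_mul_const1 n : Pi *m (const_mx 1 : 'M[R]_(k, n)) = 0.
Proof.
have -> : const_mx 1 = (const_mx 1 : 'M[R]_(k, 1)) *m (const_mx 1 : 'M_(1, n)).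
  by apply/matrixP => i j; rewrite !mxE big_ord1 !mxE mulr1.
by rewrite mulmxA; move/andP: Pi_span => [/sub_kermxP -> _]; rewrite mul0mx.
Qed.

(* [Pi^T Pi] is the orthogonal projection onto the row space of [Pi], which
   contains the columns of [B]. *)
Lemma trBmx_trPi_Pi : B^T *m Pi^T *m Pi = B^T.
Proof.
have : (B^T <= Pi)%MS.
  apply: submx_trans (_ : (B^T <= kermx (const_mx 1))%MS) _.
    exact/sub_kermxP/trBmx_mul_const1.
  by case/andP: Pi_span.
by case/submxP => W ->; rewrite -(mulmxA W) Pi_orthonormal mulmx1.
Qed.

Lemma sqr_invsqrt_k : (Num.sqrt (k%:R : R))^-1 ^+ 2 = k%:R^-1.
Proof. by rewrite exprVn sqr_sqrtr ?ler0n. Qed.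

Lemma frame_mul_tr : G *m G^T = 1%:M.
Proof.
rewrite [(_ *: _)^T]linearZ /= trmx_mul -scalemxAl -scalemxAr scalerA -expr2.
rewrite sqr_invsqrt_k mulmxA -(mulmxA Pi) Bmx_mul_tr mulmxBr -scalemxAr mulmx1.
rewrite Pi_mul_const1 subr0 -scalemxAl Pi_orthonormal scalerA.
by rewrite mulVf ?scale1r ?pnatr_eq0 -?lt0n.
Qed.

Lemma gram_frame : G^T *m G = k%:R^-1 *: (B^T *m B).
Proof.
rewrite [(_ *: _)^T]linearZ /= trmx_mul -scalemxAl -scalemxAr scalerA -expr2.
by rewrite sqr_invsqrt_k mulmxA trBmx_trPi_Pi.
Qed.

Lemma vnorm_col_frame c : vnorm (col c G) = Num.sqrt (2 / k%:R).
Proof.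
rewrite /vnorm; have -> : \sum_i col c G i 0 ^+ 2 = (G^T *m G) c c.
  by rewrite [RHS]mxE; apply: eq_bigr => i _; rewrite !mxE expr2.
have ends_neq : ((pair_of c).1 == (pair_of c).2) = false.
  by rewrite -val_eqE ltn_eqF ?pair_of_lt.
rewrite gram_frame mxE gram_Bmx ends_neq eq_sym ends_neq !eqxx.
by congr Num.sqrt; rewrite /=; ring.
Qed.

Local Notation absB i c :=
  ((i == (pair_of c).1)%:R + (i == (pair_of c).2)%:R : R).

Lemma sqr_gram_frame c c' : (G^T *m G) c c' ^+ 2 =
  k%:R ^- 2 * (2 * (c' == c)%:R + \sum_i absB i c * absB i c').
Proof.
rewrite gram_frame mxE gram_Bmx exprMn exprVn sqr_incidence_dot ?pair_of_lt //.
by rewrite -xpair_eqE -!surjective_pairing (inj_eq (@pair_of_inj k)) eq_sym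
  sum_unsigned_incidence_dot.
Qed.

Lemma sum_sqr_frame_diag_ge (d : 'rV[R]_(npairs k)) :
  2 * k%:R ^- 2 * \sum_c d 0 c ^+ 2 <=
  \sum_b \sum_a ((G *m diag_mx d *m G^T) a b) ^+ 2.
Proof.
have split_term c c' : d 0 c * d 0 c' * (G^T *m G) c c' ^+ 2 =
    2 * k%:R ^- 2 * ((c' == c)%:R * (d 0 c * d 0 c')) +
    k%:R ^- 2 * (d 0 c * d 0 c' * \sum_i absB i c * absB i c').
  by rewrite sqr_gram_frame; ring.
have -> : \sum_b \sum_a ((G *m diag_mx d *m G^T) a b) ^+ 2 =
    2 * k%:R ^- 2 * \sum_c d 0 c ^+ 2 +
    k%:R ^- 2 * \sum_i (\sum_c d 0 c * absB i c) ^+ 2.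
  rewrite sum_sqr_mx_diag_tr -sum_quad_gram !mulr_sumr -big_split /=.
  apply: eq_bigr => c _.
  rewrite [d 0 c ^+ 2]expr2 -(sum_indicator_mull c (fun c' => d 0 c * d 0 c')).
  rewrite 2!mulr_sumr -big_split /=.
  by apply: eq_bigr => c' _; rewrite split_term.
rewrite lerDl mulr_ge0 ?sumr_ge0 // => [|i _]; last exact: sqr_ge0.
by rewrite invr_ge0 exprn_ge0 ?ler0n.
Qed.

Lemma opnorm_frame_diag_ge (d : 'rV[R]_(npairs k)) :
  k%:R^-1 * Num.sqrt (2 / (k%:R - 1)) * frob (diag_mx d) <=
  opnorm (G *m diag_mx d *m G^T).
Proof.
set M := G *m diag_mx d *m G^T.
have km1_gt0 : (0 < k.-1)%N by rewrite -ltnS prednK.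
have natr_km1 : k.-1%:R = k%:R - 1 :> R by rewrite -subn1 natrB.
have [b col_b] := exists_ge_mean (fun b => \sum_a M a b ^+ 2) km1_gt0.
apply: le_trans (vnorm_col_le_opnorm M b).
have k_inv_ge0 : 0 <= k%:R^-1 :> R by rewrite invr_ge0 ler0n.
rewrite frob_diag_mx /vnorm -(ger0_norm k_inv_ge0) -sqrtr_sqr -!sqrtrM ?sqr_ge0 //.
apply: ler_wsqrtr; under [X in _ <= X]eq_bigr do rewrite mxE.
apply: le_trans col_b; rewrite natr_km1.
- set Sd := \sum_c _.
  have -> : k%:R^-1 ^+ 2 * (2 / (k%:R - 1)) * Sd =
      2 * k%:R ^- 2 * Sd / (k%:R - 1) by rewrite exprVn; ring.
  apply: ler_wpM2r; last exact: sum_sqr_frame_diag_ge.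
  by rewrite invr_ge0 subr_ge0 ler1n.
- by rewrite mulr_ge0 ?sqr_ge0 ?divr_ge0 ?subr_ge0 ?ler1n.
Qed.

End Frame.

Theorem lemma10 (R : realType) (k : nat) (hk : (2 <= k)%N)
  (Pi : 'M[R]_(k.-1, k))
  (hPi_on : Pi *m Pi^T = 1%:M)
  (hPi_span : (Pi == kermx (const_mx 1 : 'M[R]_(k, 1)))%MS) :
  let G := (Num.sqrt (k%:R : R))^-1 *: (Pi *m Bmx R k) in
  [/\ (forall c : 'I_(npairs k), vnorm (col c G) = Num.sqrt (2 / k%:R)),
      G *m G^T = 1%:M
    & forall d : 'rV[R]_(npairs k),
        opnorm (G *m diag_mx d *m G^T)
          >= k%:R^-1 * Num.sqrt (2 / (k%:R - 1)) * frob (diag_mx d)].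
Proof.
split.
- exact: (vnorm_col_frame hPi_on hPi_span).
- exact: (frame_mul_tr hk hPi_on hPi_span).
- exact: (opnorm_frame_diag_ge hk hPi_on hPi_span).
Qed.
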